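(* Let $X$ be a connected, locally path connected space and $x_0\in X$. The following are equivalent: (1) $\pi_1^{wh}(X,x_0)$ is $T_0$; (2) $\pi_1^{wh}(X,x_0)$ is $T_1$; (3) $\pi_1^{wh}(X,x_0)$ is $T_2$; (4) $\pi_1^{wh}(X,x_0)$ is $T_3$ (regular and $T_1$); (5) $\pi^s_1(X,x_0)=1$; (6) $\pi_1^{wh}(X,x_0)$ is totally separated. Moreover, $\pi_1^{wh}(X,x_0)$ is always regular.
   Context: $\pi_1^{wh}(X,x_0)$ denotes $\pi_1(X,x_0)$ with the whisker topology, which has as a basis the sets $[\alpha]\,i_*\pi_1(U,x_0)$ for $[\alpha]\in\pi_1(X,x_0)$ and $U$ an open neighborhood of $x_0$ ($i_*$ induced by inclusion). A loop $\beta$ at $x_0$ is small if for every open neighborhood $U$ of $x_0$ it is homotopic rel endpoints to a loop in $U$; $\pi^s_1(X,x_0)$ is the set of homotopy classes of small loops at $x_0$. A space is totally separated if any two distinct points are separated by a clopen set containing one but not the other. Regular means: a point and a closed set not containing it have disjoint open neighborhoods. *)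

From Stdlib Require Import Reals.
Open Scope R_scope.
Unset Implicit Arguments.

Record topology (X : Type) := Topology {
  is_open : (X -> Prop) -> Prop;
  open_full : is_open (fun _ => True);
  open_inter : forall U V, is_open U -> is_open V -> is_open (fun x => U x /\ V x);
  open_union : forall F : (X -> Prop) -> Prop,
      (forall U, F U -> is_open U) -> is_open (fun x => exists U, F U /\ U x)
}.

Definition is_closed X (T : topology X) (C : X -> Prop) : Prop :=
  is_open X T (fun x => ~ C x).

Section Sep.
Variable (A : Type) (op : (A -> Prop) -> Prop).
Definition closed_in (C : A -> Prop) := op (fun x => ~ C x).
Definition T0_sp := forall a b : A, a <> b ->
  exists U, op U /\ ((U a /\ ~ U b) \/ (U b /\ ~ U a)).
Definition T1_sp := forall a b : A, a <> b -> exists U, op U /\ U a /\ ~ U b.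
Definition T2_sp := forall a b : A, a <> b ->
  exists U V, op U /\ op V /\ U a /\ V b /\ (forall x, U x -> V x -> False).
Definition regular_sp := forall (x : A) (C : A -> Prop), closed_in C -> ~ C x ->
  exists U V, op U /\ op V /\ U x /\ (forall y, C y -> V y) /\
              (forall y, U y -> V y -> False).
Definition T3_sp := regular_sp /\ T1_sp.
Definition totally_separated_sp := forall a b : A, a <> b ->
  exists U, op U /\ closed_in U /\ U a /\ ~ U b.
End Sep.

(** * Paths: functions R -> X, continuous on the unit interval [0,1]
    (with its subspace topology from R; values outside [0,1] are irrelevant). *)
Definition I01 (t : R) : Prop := 0 <= t <= 1.

Section Paths.
Variables (X : Type) (T : topology X).

Definition path_cont (f : R -> X) : Prop :=
  forall t, I01 t -> forall U, is_open X T U -> U (f t) ->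
  exists d, d > 0 /\ forall s, I01 s -> Rabs (s - t) < d -> U (f s).

(* continuity on [0,1] x [0,1] (product = max-metric topology) *)
Definition square_cont (H : R -> R -> X) : Prop :=
  forall s t, I01 s -> I01 t -> forall U, is_open X T U -> U (H s t) ->
  exists d, d > 0 /\ forall s' t', I01 s' -> I01 t' ->
     Rabs (s' - s) < d -> Rabs (t' - t) < d -> U (H s' t').

Definition is_path (f : R -> X) (a b : X) : Prop :=
  path_cont f /\ f 0 = a /\ f 1 = b.

Definition is_loop (x0 : X) (f : R -> X) : Prop := is_path f x0 x0.

Definition loop_homotopic (x0 : X) (f g : R -> X) : Prop :=
  exists H : R -> R -> X, square_cont H /\
    (forall t, I01 t -> H 0 t = f t /\ H 1 t = g t) /\
    (forall s, I01 s -> H s 0 = x0 /\ H s 1 = x0).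

Definition loop_in (U : X -> Prop) (f : R -> X) : Prop := forall t, I01 t -> U (f t).

Definition concat (f g : R -> X) : R -> X :=
  fun t => if Rle_dec t (1/2) then f (2 * t) else g (2 * t - 1).

Definition const_loop (x0 : X) : R -> X := fun _ => x0.

Definition hclass (x0 : X) (f : R -> X) : (R -> X) -> Prop :=
  fun g => is_loop x0 g /\ loop_homotopic x0 f g.

Definition pi1 (x0 : X) : Type :=
  { C : (R -> X) -> Prop | exists f, is_loop x0 f /\ C = hclass x0 f }.

(** Basic set  [alpha] i_* pi1(U,x0)  of the whisker topology. *)
Definition wh_basic (x0 : X) (alpha : R -> X) (U : X -> Prop) (c : pi1 x0) : Prop :=
  exists gamma, is_loop x0 gamma /\ loop_in U gamma /\ proj1_sig c (concat alpha gamma).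

Definition wh_open (x0 : X) (S : pi1 x0 -> Prop) : Prop :=
  forall c, S c -> exists alpha U, is_loop x0 alpha /\ is_open X T U /\ U x0 /\
     wh_basic x0 alpha U c /\ (forall d, wh_basic x0 alpha U d -> S d).

(** Small loops; pi_1^s(X,x0) = 1 means every small loop is null-homotopic. *)
Definition small_loop (x0 : X) (b : R -> X) : Prop :=
  is_loop x0 b /\ forall U, is_open X T U -> U x0 ->
     exists g, is_loop x0 g /\ loop_in U g /\ loop_homotopic x0 b g.

Definition small_pi1_trivial (x0 : X) : Prop :=
  forall b, small_loop x0 b -> loop_homotopic x0 (const_loop x0) b.

Definition connected_sp : Prop :=
  forall U, is_open X T U -> is_closed X T U -> (forall x, U x) \/ (forall x, ~ U x).

Definition path_connected_set (V : X -> Prop) : Prop :=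
  forall a b, V a -> V b -> exists f, is_path f a b /\ loop_in V f.

Definition locally_path_connected : Prop :=
  forall x U, is_open X T U -> U x ->
    exists V, is_open X T V /\ V x /\ (forall y, V y -> U y) /\ path_connected_set V.
End Paths.

(* The basic sets [a]U of the whisker topology are clopen: a class [f] outside
   [a]U has the basic neighbourhood [f]U, and [f]U meets [a]U only if [f] lies
   in [a]U, since loops in U can be cancelled.  Hence the space is always
   regular, and it is totally separated as soon as distinct classes [a] <> [b]
   can be separated by some [a]U.  That fails for every U exactly when the loop
   a^-1 b is small, so it can only fail when pi_1^s(X,x0) is nontrivial.
   Conversely an essential small loop b gives two classes 1 <> [b] such that
   every open set containing either one contains the other, so the space is
   not T0. *)

From Stdlib Require Import Reals Lra Psatz Classical FunctionalExtensionality PropExtensionality ProofIrrelevance.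
Open Scope R_scope.

Section SeparationAxioms.
Variables (A : Type) (op : (A -> Prop) -> Prop).

Lemma T1_sp_T0 : T1_sp A op -> T0_sp A op.
Proof.
  intros H a b Hab. destruct (H a b Hab) as [U [HU [Ua nUb]]]. exists U; auto.
Qed.

Lemma T2_sp_T1 : T2_sp A op -> T1_sp A op.
Proof.
  intros H a b Hab. destruct (H a b Hab) as [U [V [HU [_ [Ua [Vb HUV]]]]]].
  exists U; repeat split; eauto.
Qed.

Lemma totally_separated_T2 : totally_separated_sp A op -> T2_sp A op.
Proof.
  intros H a b Hab. destruct (H a b Hab) as [U [HU [HnU [Ua nUb]]]].
  exists U, (fun x => ~ U x); repeat split; auto.
Qed.

End SeparationAxioms.

Section Continuity.
Variables (X : Type) (T : topology X).

Lemma I01_0 : I01 0. Proof. unfold I01; lra. Qed.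
Lemma I01_1 : I01 1. Proof. unfold I01; lra. Qed.

Lemma square_cont_of_path f : path_cont X T f -> square_cont X T (fun _ t => f t).
Proof.
  intros Hf s t Hs Ht U HU Hu.
  destruct (Hf t Ht U HU Hu) as [d [Hd Hd']].
  exists d; split; auto.
Qed.

Lemma path_cont_of_square h : square_cont X T (fun _ t => h t) -> path_cont X T h.
Proof.
  intros H t Ht U HU Hu.
  destruct (H 0 t I01_0 Ht U HU Hu) as [d [Hd Hd']].
  exists d; split; auto.
  intros s Hs Hst. apply (Hd' 0 s I01_0 Hs); auto.
  rewrite Rminus_0_r, Rabs_R0; lra.
Qed.

Lemma square_cont_swap K : square_cont X T K -> square_cont X T (fun s t => K t s).
Proof.
  intros H s t Hs Ht U HU Hu.
  destruct (H t s Ht Hs U HU Hu) as [d [Hd Hd']].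
  exists d; split; auto.
Qed.

Lemma square_cont_flip K : square_cont X T K -> square_cont X T (fun s t => K (1 - s) t).
Proof.
  intros H s t Hs Ht U HU Hu.
  assert (Hs1 : I01 (1 - s)) by (unfold I01 in *; lra).
  destruct (H (1 - s) t Hs1 Ht U HU Hu) as [d [Hd Hd']].
  exists d; split; auto.
  intros s' t' Hs' Ht' H1 H2. apply Hd'; auto.
  - unfold I01 in *; lra.
  - replace (1 - s' - (1 - s)) with (- (s' - s)) by ring. rewrite Rabs_Ropp; auto.
Qed.

Lemma square_cont_glue K L : square_cont X T K -> square_cont X T L ->
  (forall s, I01 s -> K s 1 = L s 0) ->
  square_cont X T (fun s t => if Rle_dec t (1/2) then K s (2 * t) else L s (2 * t - 1)).
Proof.
  intros HK HL HKL s t Hs Ht U HU Hu.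
  destruct (Rtotal_order t (1/2)) as [Hlt|[Heq|Hgt]].
  - destruct (Rle_dec t (1/2)) as [_|n]; [|lra].
    assert (Ht2 : I01 (2 * t)) by (unfold I01 in *; lra).
    destruct (HK s (2 * t) Hs Ht2 U HU Hu) as [d [Hd Hd']].
    exists (Rmin (d/2) (1/2 - t)); split.
    + apply Rmin_pos; lra.
    + intros s' t' Hs' Ht' H1 H2.
      pose proof (Rmin_l (d/2) (1/2 - t)); pose proof (Rmin_r (d/2) (1/2 - t)).
      apply Rabs_def2 in H1; apply Rabs_def2 in H2.
      destruct (Rle_dec t' (1/2)); [|lra].
      apply Hd'; auto; [unfold I01 in *; lra | apply Rabs_def1; lra | apply Rabs_def1; lra].
  - destruct (Rle_dec t (1/2)) as [_|n]; [|lra].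
    rewrite Heq in Hu. replace (2 * (1/2)) with 1 in Hu by field.
    assert (HuL : U (L s 0)) by (rewrite <- HKL; auto).
    destruct (HK s 1 Hs I01_1 U HU Hu) as [dK [HdK HdK']].
    destruct (HL s 0 Hs I01_0 U HU HuL) as [dL [HdL HdL']].
    exists (Rmin dK dL / 2); split.
    + pose proof (Rmin_pos dK dL HdK HdL); lra.
    + intros s' t' Hs' Ht' H1 H2.
      pose proof (Rmin_l dK dL); pose proof (Rmin_r dK dL).
      apply Rabs_def2 in H1; apply Rabs_def2 in H2.
      destruct (Rle_dec t' (1/2)).
      * apply HdK'; try (unfold I01 in *; lra); apply Rabs_def1; lra.
      * apply HdL'; try (unfold I01 in *; lra); apply Rabs_def1; lra.
  - destruct (Rle_dec t (1/2)) as [n|_]; [lra|].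
    assert (Ht2 : I01 (2 * t - 1)) by (unfold I01 in *; lra).
    destruct (HL s (2 * t - 1) Hs Ht2 U HU Hu) as [d [Hd Hd']].
    exists (Rmin (d/2) (t - 1/2)); split.
    + apply Rmin_pos; lra.
    + intros s' t' Hs' Ht' H1 H2.
      pose proof (Rmin_l (d/2) (t - 1/2)); pose proof (Rmin_r (d/2) (t - 1/2)).
      apply Rabs_def2 in H1; apply Rabs_def2 in H2.
      destruct (Rle_dec t' (1/2)); [lra|].
      apply Hd'; auto; [unfold I01 in *; lra | apply Rabs_def1; lra | apply Rabs_def1; lra].
Qed.

Lemma square_cont_comp_lipschitz f k L : path_cont X T f -> L > 0 ->
  (forall s t, I01 s -> I01 t -> I01 (k s t)) ->
  (forall s t s' t', I01 s -> I01 t -> I01 s' -> I01 t' ->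
     Rabs (k s' t' - k s t) <= L * (Rabs (s' - s) + Rabs (t' - t))) ->
  square_cont X T (fun s t => f (k s t)).
Proof.
  intros Hf HL Hk HkL s t Hs Ht U HU Hu.
  destruct (Hf (k s t) (Hk s t Hs Ht) U HU Hu) as [d [Hd Hd']].
  exists (d / (2 * L)); split.
  - apply Rdiv_lt_0_compat; lra.
  - intros s' t' Hs' Ht' H1 H2. apply Hd'; [apply Hk; auto|].
    eapply Rle_lt_trans; [apply HkL; auto|].
    assert (E : L * (d / (2 * L)) = d / 2) by (field; lra).
    assert (L * (Rabs (s' - s) + Rabs (t' - t)) < L * (d / (2 * L) + d / (2 * L)))
      by (apply Rmult_lt_compat_l; lra).
    lra.
Qed.

Lemma path_cont_comp_lipschitz f k L : path_cont X T f -> L > 0 ->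
  (forall t, I01 t -> I01 (k t)) ->
  (forall t t', I01 t -> I01 t' -> Rabs (k t' - k t) <= L * Rabs (t' - t)) ->
  path_cont X T (fun t => f (k t)).
Proof.
  intros Hf HL Hk HkL. apply path_cont_of_square.
  apply (square_cont_comp_lipschitz f (fun _ t => k t) L Hf HL); auto.
  intros s t s' t' _ Ht _ Ht'. pose proof (HkL t t' Ht Ht'). pose proof (Rabs_pos (s' - s)). nra.
Qed.

End Continuity.

Ltac case_Rle := repeat match goal with |- context [Rle_dec ?a ?b] => destruct (Rle_dec a b) end.
Ltac case_Rabs := unfold Rabs; repeat match goal with |- context [Rcase_abs ?x] => destruct (Rcase_abs x) end.

Section Loops.
Variables (X : Type) (T : topology X) (x0 : X).

Local Notation loop := (is_loop X T x0).
Local Notation homotopic := (loop_homotopic X T x0).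
Local Notation cat := (concat X).
Local Notation cst := (const_loop X x0).

Definition rev (f : R -> X) : R -> X := fun t => f (1 - t).

Lemma const_is_loop : loop cst.
Proof.
  split; [|split; reflexivity].
  intros t Ht U HU Hu. exists 1; split; [lra|]. intros; exact Hu.
Qed.

Lemma concat_is_loop f g : loop f -> loop g -> loop (cat f g).
Proof.
  intros [Hf [Hf0 Hf1]] [Hg [Hg0 Hg1]]. split; [|split].
  - apply path_cont_of_square. unfold concat.
    apply (square_cont_glue X T (fun _ t => f t) (fun _ t => g t));
      [apply square_cont_of_path; auto | apply square_cont_of_path; auto | intros; congruence].
  - unfold concat. case_Rle; [|lra]. replace (2 * 0) with 0 by ring; auto.
  - unfold concat. case_Rle; [lra|]. replace (2 * 1 - 1) with 1 by ring; auto.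
Qed.

Lemma rev_is_loop f : loop f -> loop (rev f).
Proof.
  intros [Hf [Hf0 Hf1]]. split; [|split].
  - apply (path_cont_comp_lipschitz X T f (fun t => 1 - t) 1 Hf); [lra| |].
    + intros; unfold I01 in *; lra.
    + intros. replace (1 - t' - (1 - t)) with (- (t' - t)) by ring. rewrite Rabs_Ropp; lra.
  - unfold rev. replace (1 - 0) with 1 by ring; auto.
  - unfold rev. replace (1 - 1) with 0 by ring; auto.
Qed.

Lemma const_loop_in (U : X -> Prop) : U x0 -> loop_in X U cst.
Proof. intros H t _; exact H. Qed.

Lemma concat_loop_in U f g : loop_in X U f -> loop_in X U g -> loop_in X U (cat f g).
Proof.
  intros Hf Hg t Ht. unfold concat. case_Rle; [apply Hf|apply Hg]; unfold I01 in *; lra.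
Qed.

Lemma rev_loop_in U f : loop_in X U f -> loop_in X U (rev f).
Proof. intros Hf t Ht. apply Hf. unfold I01 in *; lra. Qed.

Lemma homotopic_refl f : loop f -> homotopic f f.
Proof.
  intros [Hf [H0 H1]]. exists (fun _ t => f t).
  split; [apply square_cont_of_path; auto|]. split; intros; auto.
Qed.

Lemma homotopic_sym f g : homotopic f g -> homotopic g f.
Proof.
  intros [H [Hc [He Hb]]]. exists (fun s t => H (1 - s) t).
  split; [apply square_cont_flip; auto|]. split.
  - intros t Ht. replace (1 - 0) with 1 by ring. replace (1 - 1) with 0 by ring.
    destruct (He t Ht); split; auto.
  - intros s Hs. apply Hb. unfold I01 in *; lra.
Qed.

Lemma homotopic_trans f g h : homotopic f g -> homotopic g h -> homotopic f h.
Proof.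
  intros [H1 [Hc1 [He1 Hb1]]] [H2 [Hc2 [He2 Hb2]]].
  exists (fun s t => if Rle_dec s (1/2) then H1 (2 * s) t else H2 (2 * s - 1) t).
  split.
  - apply (square_cont_swap X T
      (fun s t => if Rle_dec t (1/2) then H1 (2 * t) s else H2 (2 * t - 1) s)).
    apply (square_cont_glue X T (fun s t => H1 t s) (fun s t => H2 t s));
      try apply square_cont_swap; auto.
    intros s Hs. rewrite (proj2 (He1 s Hs)), (proj1 (He2 s Hs)); reflexivity.
  - split.
    + intros t Ht. case_Rle; try lra.
      replace (2 * 0) with 0 by ring. replace (2 * 1 - 1) with 1 by ring.
      split; [apply He1|apply He2]; auto.
    + intros s Hs. case_Rle; [apply Hb1|apply Hb2]; unfold I01 in *; lra.
Qed.

Lemma concat_homotopic f f' g g' :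
  homotopic f f' -> homotopic g g' -> homotopic (cat f g) (cat f' g').
Proof.
  intros [H1 [Hc1 [He1 Hb1]]] [H2 [Hc2 [He2 Hb2]]].
  exists (fun s t => if Rle_dec t (1/2) then H1 s (2 * t) else H2 s (2 * t - 1)).
  split.
  - apply square_cont_glue; auto.
    intros s Hs. rewrite (proj2 (Hb1 s Hs)), (proj1 (Hb2 s Hs)); reflexivity.
  - split.
    + intros t Ht. unfold concat. case_Rle; [apply He1|apply He2]; unfold I01 in *; lra.
    + intros s Hs. case_Rle; try lra.
      replace (2 * 0) with 0 by ring. replace (2 * 1 - 1) with 1 by ring.
      split; [apply Hb1|apply Hb2]; auto.
Qed.

Lemma homotopic_ext f g f' g' : homotopic f g -> (forall t, I01 t -> f t = f' t) ->
  (forall t, I01 t -> g t = g' t) -> homotopic f' g'.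
Proof.
  intros [H [Hc [He Hb]]] Ef Eg. exists H. split; auto. split; auto.
  intros t Ht. rewrite <- Ef, <- Eg; auto.
Qed.

Definition lipschitz2_self_map (p : R -> R) : Prop :=
  (forall t, I01 t -> I01 (p t)) /\
  forall t t', I01 t -> I01 t' -> Rabs (p t' - p t) <= 2 * Rabs (t' - t).

Lemma convex_combination_lipschitz a a' b b' s s' e :
  0 <= a <= 1 -> 0 <= a' <= 1 -> 0 <= b <= 1 -> 0 <= b' <= 1 -> 0 <= s <= 1 -> 0 <= s' <= 1 ->
  Rabs (a' - a) <= 2 * e -> Rabs (b' - b) <= 2 * e ->
  Rabs (a' + s' * (b' - a') - (a + s * (b - a))) <= 6 * (Rabs (s' - s) + e).
Proof.
  intros. replace (a' + s' * (b' - a') - (a + s * (b - a))) with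
    ((1 - s') * (a' - a) + s' * (b' - b) + (s' - s) * (b - a)) by ring.
  eapply Rle_trans; [apply Rabs_triang|].
  eapply Rle_trans; [apply Rplus_le_compat_r, Rabs_triang|].
  rewrite !Rabs_mult, (Rabs_pos_eq (1 - s')), (Rabs_pos_eq s') by lra.
  assert (Rabs (b - a) <= 1) by (apply Rabs_le; lra).
  pose proof (Rabs_pos (a' - a)). pose proof (Rabs_pos (b' - b)). pose proof (Rabs_pos (s' - s)).
  nra.
Qed.

(* Every groupoid law below is an instance: both sides are f composed with
   piecewise-linear self-maps of [0,1], joined by the straight-line homotopy. *)
Lemma homotopic_reparam f p q : path_cont X T f ->
  lipschitz2_self_map p -> lipschitz2_self_map q -> p 0 = q 0 -> p 1 = q 1 ->
  f (p 0) = x0 -> f (p 1) = x0 -> homotopic (fun t => f (p t)) (fun t => f (q t)).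
Proof.
  intros Hf [Hp1 Hp2] [Hq1 Hq2] E0 E1 F0 F1.
  exists (fun s t => f (p t + s * (q t - p t))). split.
  - apply (square_cont_comp_lipschitz X T f (fun s t => p t + s * (q t - p t)) 6 Hf); [lra| |].
    + intros s t Hs Ht. pose proof (Hp1 t Ht); pose proof (Hq1 t Ht). unfold I01 in *.
      split; nra.
    + intros s t s' t' Hs Ht Hs' Ht'.
      pose proof (Hp1 t Ht); pose proof (Hq1 t Ht); pose proof (Hp1 t' Ht'); pose proof (Hq1 t' Ht').
      unfold I01 in *. apply convex_combination_lipschitz; auto.
  - split.
    + intros t Ht. split; f_equal; ring.
    + intros s Hs. rewrite <- E0, <- E1.
      replace (p 0 + s * (p 0 - p 0)) with (p 0) by ring.
      replace (p 1 + s * (p 1 - p 1)) with (p 1) by ring. auto.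
Qed.

Ltac solve_lipschitz2 :=
  split; [intros t Ht; unfold I01 in *; case_Rle; split; lra
         | intros t t' Ht Ht'; unfold I01 in *; case_Rle; case_Rabs; lra].

Ltac solve_pointwise :=
  unfold concat, rev, const_loop; case_Rle;
  first [reflexivity | exfalso; lra | f_equal; lra | idtac].

Lemma concat_const_r f : loop f -> homotopic (cat f cst) f.
Proof.
  intros [Hf [Hf0 Hf1]].
  set (p t := if Rle_dec t (1/2) then 2 * t else 1).
  apply (homotopic_ext (fun t => f (p t)) (fun t => f t)).
  - apply (homotopic_reparam f p (fun t => t)); auto; unfold p; try solve_lipschitz2;
      case_Rle; try lra; replace (2 * 0) with 0 by ring; auto.
  - intros t Ht. unfold p. solve_pointwise. auto.
  - reflexivity.
Qed.

Lemma concat_const_l f : loop f -> homotopic (cat cst f) f.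
Proof.
  intros [Hf [Hf0 Hf1]].
  set (p t := if Rle_dec t (1/2) then 0 else 2 * t - 1).
  apply (homotopic_ext (fun t => f (p t)) (fun t => f t)).
  - apply (homotopic_reparam f p (fun t => t)); auto; unfold p; try solve_lipschitz2;
      case_Rle; try lra; replace (2 * 1 - 1) with 1 by ring; auto.
  - intros t Ht. unfold p. solve_pointwise. auto.
  - reflexivity.
Qed.

Lemma concat_rev_r f : loop f -> homotopic (cat f (rev f)) cst.
Proof.
  intros [Hf [Hf0 Hf1]].
  set (p t := if Rle_dec t (1/2) then 2 * t else 2 - 2 * t).
  apply (homotopic_ext (fun t => f (p t)) (fun _ => f 0)).
  - apply (homotopic_reparam f p (fun _ => 0)); auto; unfold p; try solve_lipschitz2;
      case_Rle; try lra; replace (2 * 0) with 0 by ring; replace (2 - 2 * 1) with 0 by ring; auto.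
  - intros t Ht. unfold p. solve_pointwise.
  - intros t _. exact Hf0.
Qed.

Lemma concat_rev_l f : loop f -> homotopic (cat (rev f) f) cst.
Proof.
  intros Hf. apply (homotopic_ext (cat (rev f) (rev (rev f))) cst).
  - apply concat_rev_r, rev_is_loop; auto.
  - intros t Ht. solve_pointwise.
  - reflexivity.
Qed.

Lemma concat_assoc f g h : loop f -> loop g -> loop h ->
  homotopic (cat (cat f g) h) (cat f (cat g h)).
Proof.
  intros Hf Hg Hh.
  destruct (concat_is_loop _ _ Hf (concat_is_loop _ _ Hg Hh)) as [HF [HF0 HF1]].
  set (p t := if Rle_dec t (1/4) then 2 * t
              else if Rle_dec t (1/2) then t + 1/4 else (t + 1) / 2).
  apply (homotopic_ext (fun t => cat f (cat g h) (p t)) (fun t => cat f (cat g h) t)).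
  - apply (homotopic_reparam _ p (fun t => t)); auto; unfold p; try solve_lipschitz2;
      case_Rle; try lra; replace (2 * 0) with 0 by ring; replace ((1 + 1) / 2) with 1 by field; auto.
  - intros t Ht. unfold p. solve_pointwise.
  - reflexivity.
Qed.

Lemma concat_rev_l_homotopic f g h : loop f -> loop g -> loop h ->
  (homotopic (cat (rev f) g) h <-> homotopic g (cat f h)).
Proof.
  intros Hf Hg Hh. assert (Hr := rev_is_loop f Hf). split; intros H.
  - eapply homotopic_trans; [apply homotopic_sym, concat_const_l; auto|].
    eapply homotopic_trans;
      [apply concat_homotopic; [apply homotopic_sym, (concat_rev_r f)|apply homotopic_refl]; auto|].
    eapply homotopic_trans; [apply concat_assoc; auto|].
    apply concat_homotopic; [apply homotopic_refl|]; auto.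
  - eapply homotopic_trans; [apply concat_homotopic; [apply homotopic_refl; auto|exact H]|].
    eapply homotopic_trans; [apply homotopic_sym, concat_assoc; auto|].
    eapply homotopic_trans; [apply concat_homotopic; [apply concat_rev_l|apply homotopic_refl]; auto|].
    apply concat_const_l; auto.
Qed.

Lemma concat_rev_r_homotopic f g h : loop f -> loop g -> loop h ->
  homotopic (cat f g) h -> homotopic f (cat h (rev g)).
Proof.
  intros Hf Hg Hh H. assert (Hr := rev_is_loop g Hg).
  eapply homotopic_trans; [apply homotopic_sym, concat_const_r; auto|].
  eapply homotopic_trans;
    [apply concat_homotopic; [apply homotopic_refl|apply homotopic_sym, (concat_rev_r g)]; auto|].
  eapply homotopic_trans; [apply homotopic_sym, concat_assoc; auto|].
  apply concat_homotopic; [exact H|apply homotopic_refl; auto].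
Qed.

End Loops.

Arguments rev {X} f t.

Section WhiskerTopology.
Variables (X : Type) (T : topology X) (x0 : X).

Local Notation loop := (is_loop X T x0).
Local Notation homotopic := (loop_homotopic X T x0).
Local Notation cat := (concat X).
Local Notation cst := (const_loop X x0).
Local Notation pi1 := (pi1 X T x0).
Local Notation wh_basic := (wh_basic X T x0).
Local Notation wh_open := (wh_open X T x0).

Lemma pi1_rep (c : pi1) : exists f, loop f /\ forall g, proj1_sig c g <-> loop g /\ homotopic f g.
Proof.
  destruct c as [C [f [Hf E]]]. subst C. exists f; split; auto.
  intro g; simpl; unfold hclass; tauto.
Qed.

Lemma pi1_mem_homotopic (c : pi1) g h : proj1_sig c g -> proj1_sig c h -> homotopic g h.
Proof.
  intros H1 H2. destruct (pi1_rep c) as [f [Hf E]]. apply E in H1. apply E in H2.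
  eapply homotopic_trans; [apply homotopic_sym, H1|apply H2].
Qed.

Lemma pi1_mem_homotopic_closed (c : pi1) g h :
  proj1_sig c g -> homotopic g h -> loop h -> proj1_sig c h.
Proof.
  intros H Hgh Hh. destruct (pi1_rep c) as [f [Hf E]]. apply E in H. apply E.
  split; auto. eapply homotopic_trans; [apply H|auto].
Qed.

Lemma pi1_eq_of_homotopic (c d : pi1) f g :
  proj1_sig c f -> proj1_sig d g -> homotopic f g -> c = d.
Proof.
  intros Hcf Hdg Hfg.
  assert (Hcd : forall h, proj1_sig c h <-> proj1_sig d h).
  { destruct (pi1_rep c) as [f' [Hf' Ec]], (pi1_rep d) as [g' [Hg' Ed]].
    apply Ec in Hcf. apply Ed in Hdg.
    assert (Hfg' : homotopic f' g').
    { eapply homotopic_trans; [apply Hcf|].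
      eapply homotopic_trans; [apply Hfg|apply homotopic_sym, Hdg]. }
    intro h. rewrite Ec, Ed. split; intros [Hh Hk]; split; auto.
    - eapply homotopic_trans; [apply homotopic_sym, Hfg'|exact Hk].
    - eapply homotopic_trans; [apply Hfg'|exact Hk]. }
  destruct c as [C HC], d as [D HD]; simpl in Hcd.
  assert (C = D) as <-
    by (apply functional_extensionality; intro h; apply propositional_extensionality; auto).
  f_equal. apply proof_irrelevance.
Qed.

Definition pi1_class f (Hf : loop f) : pi1 :=
  exist _ (hclass X T x0 f) (ex_intro _ f (conj Hf eq_refl)).

Lemma pi1_class_mem f (Hf : loop f) : proj1_sig (pi1_class f Hf) f.
Proof. split; auto using homotopic_refl. Qed.

Lemma wh_basic_self (c : pi1) a U : proj1_sig c a -> U x0 -> wh_basic a U c.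
Proof.
  intros Hca Hx. destruct (pi1_rep c) as [f [Hf E]].
  assert (Ha : loop a) by (apply E in Hca; tauto).
  exists cst. split; [apply const_is_loop|]. split; [apply const_loop_in; auto|].
  apply (pi1_mem_homotopic_closed c a); [exact Hca| |].
  - apply homotopic_sym, concat_const_r; auto.
  - apply concat_is_loop; auto using const_is_loop.
Qed.

Lemma wh_basic_open a U : loop a -> is_open X T U -> U x0 -> wh_open (wh_basic a U).
Proof.
  intros Ha HU Hx c [g [Hg [HgU Hc]]].
  exists (cat a g), U. split; [apply concat_is_loop; auto|].
  split; [exact HU|]. split; [exact Hx|]. split; [apply wh_basic_self; auto|].
  intros d [e [He [HeU Hd]]]. exists (cat g e).
  split; [apply concat_is_loop; auto|]. split; [apply concat_loop_in; auto|].
  apply (pi1_mem_homotopic_closed d _ _ Hd);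
    [apply concat_assoc | apply concat_is_loop; auto using concat_is_loop]; auto.
Qed.

Lemma wh_basic_closed a U : loop a -> is_open X T U -> U x0 ->
  closed_in pi1 wh_open (wh_basic a U).
Proof.
  intros Ha HU Hx. hnf. intros c Hnc. destruct (pi1_rep c) as [f [Hf E]].
  assert (Hcf : proj1_sig c f) by (apply E; split; auto using homotopic_refl).
  exists f, U. split; [exact Hf|]. split; [exact HU|]. split; [exact Hx|].
  split; [apply wh_basic_self; auto|].
  intros e [d [Hd [HdU He]]] [g [Hg [HgU He']]]. apply Hnc.
  exists (cat g (rev d)). split; [apply concat_is_loop; auto using rev_is_loop|].
  split; [apply concat_loop_in; auto using rev_loop_in|].
  assert (Hcat : homotopic f (cat (cat a g) (rev d))).
  { apply concat_rev_r_homotopic; auto using concat_is_loop.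
    apply (pi1_mem_homotopic e); auto. }
  apply (pi1_mem_homotopic_closed c f); auto.
  - eapply homotopic_trans; [exact Hcat|apply concat_assoc; auto using rev_is_loop].
  - apply concat_is_loop; auto using concat_is_loop, rev_is_loop.
Qed.

Lemma wh_regular : regular_sp pi1 wh_open.
Proof.
  intros c C HC Hc. destruct (HC c Hc) as [a [U [Ha [HU [Hx [Hb Hsub]]]]]].
  exists (wh_basic a U), (fun d => ~ wh_basic a U d).
  split; [apply wh_basic_open; auto|]. split; [apply wh_basic_closed; auto|].
  split; [exact Hb|]. split; [|auto].
  intros y Cy By. exact (Hsub y By Cy).
Qed.

(* If no basic neighbourhood [a]U of a excludes b, then a^-1 b is small. *)
Lemma wh_separated_by_basic : small_pi1_trivial X T x0 -> forall a b : pi1, a <> b ->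
  exists f U, loop f /\ is_open X T U /\ U x0 /\ wh_basic f U a /\ ~ wh_basic f U b.
Proof.
  intros Hs a b Hab.
  destruct (pi1_rep a) as [fa [Hfa Ea]], (pi1_rep b) as [fb [Hfb Eb]].
  assert (Hafa : proj1_sig a fa) by (apply Ea; split; auto using homotopic_refl).
  assert (Hbfb : proj1_sig b fb) by (apply Eb; split; auto using homotopic_refl).
  destruct (classic (exists U, is_open X T U /\ U x0 /\ ~ wh_basic fa U b))
    as [[U [HU [Hx Hn]]]|Hn].
  { exists fa, U. split; [exact Hfa|]. split; [exact HU|]. split; [exact Hx|].
    split; [apply wh_basic_self|]; auto. }
  exfalso. apply Hab.
  assert (Hra := rev_is_loop _ _ _ fa Hfa).
  assert (Hsmall : small_loop X T x0 (cat (rev fa) fb)).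
  { split; [apply concat_is_loop; auto|]. intros U HU Hx.
    destruct (classic (wh_basic fa U b)) as [[g [Hg [HgU Hbg]]]|HnU];
      [|exfalso; apply Hn; eauto].
    exists g. split; [exact Hg|]. split; [exact HgU|].
    apply concat_rev_l_homotopic; auto. apply (pi1_mem_homotopic b); auto. }
  apply Hs, homotopic_sym in Hsmall.
  apply (concat_rev_l_homotopic _ _ _ fa) in Hsmall; auto using const_is_loop.
  apply (pi1_eq_of_homotopic a b fa fb); auto.
  eapply homotopic_trans; [apply homotopic_sym, concat_const_r; auto|].
  apply homotopic_sym, Hsmall.
Qed.

Lemma wh_totally_separated : small_pi1_trivial X T x0 -> totally_separated_sp pi1 wh_open.
Proof.
  intros Hs a b Hab. destruct (wh_separated_by_basic Hs a b Hab) as [f [U [Hf [HU [Hx Hsep]]]]].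
  exists (wh_basic f U). split; [apply wh_basic_open; auto|].
  split; [apply wh_basic_closed; auto|]. exact Hsep.
Qed.

(* A small loop b lies in every basic neighbourhood [a]U of the trivial
   class and conversely, so T0 forces b to be null-homotopic. *)
Lemma wh_T0_small_pi1_trivial : T0_sp pi1 wh_open -> small_pi1_trivial X T x0.
Proof.
  intros H0 b Hb. destruct (classic (homotopic cst b)) as [|Hn]; auto. exfalso.
  destruct Hb as [Hbl Hsmall].
  set (cb := pi1_class b Hbl). set (c1 := pi1_class cst (const_is_loop X T x0)).
  assert (Hne : cb <> c1).
  { intro E. apply Hn. pose proof (pi1_class_mem b Hbl) as Hm. fold cb in Hm.
    rewrite E in Hm. destruct Hm as [_ Hm]. exact Hm. }
  destruct (H0 cb c1 Hne) as [S [HS [[Sb nSc]|[Sc nSb]]]].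
  - destruct (HS cb Sb) as [a [U [Ha [HU [Hx [[g0 [Hg0 [Hg0U Hcb]]] Hsub]]]]]].
    destruct (Hsmall U HU Hx) as [g [Hg [HgU Hbg]]].
    apply nSc, Hsub. exists (cat g0 (rev g)).
    split; [apply concat_is_loop; auto using rev_is_loop|].
    split; [apply concat_loop_in; auto using rev_loop_in|].
    destruct Hcb as [_ Hcb].
    split; [apply concat_is_loop; auto using concat_is_loop, rev_is_loop|].
    eapply homotopic_trans; [|apply concat_assoc; auto using rev_is_loop].
    apply concat_rev_r_homotopic; auto using const_is_loop, concat_is_loop.
    eapply homotopic_trans; [apply concat_const_l; auto|].
    eapply homotopic_trans; [apply homotopic_sym, Hbg|exact Hcb].
  - destruct (HS c1 Sc) as [a [U [Ha [HU [Hx [[g0 [Hg0 [Hg0U Hc1]]] Hsub]]]]]].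
    destruct (Hsmall U HU Hx) as [g [Hg [HgU Hbg]]].
    apply nSb, Hsub. exists (cat g0 g).
    split; [apply concat_is_loop; auto|]. split; [apply concat_loop_in; auto|].
    destruct Hc1 as [_ Hc1].
    split; [apply concat_is_loop; auto using concat_is_loop|].
    eapply homotopic_trans; [apply Hbg|].
    eapply homotopic_trans; [apply homotopic_sym, concat_const_l; auto|].
    eapply homotopic_trans; [apply concat_homotopic; [exact Hc1|apply homotopic_refl; auto]|].
    apply concat_assoc; auto.
Qed.

End WhiskerTopology.

Theorem proposition3p3 (X : Type) (T : topology X) (x0 : X) :
  connected_sp X T -> locally_path_connected X T ->
  ((T0_sp (pi1 X T x0) (wh_open X T x0) <-> T1_sp (pi1 X T x0) (wh_open X T x0)) /\
   (T0_sp (pi1 X T x0) (wh_open X T x0) <-> T2_sp (pi1 X T x0) (wh_open X T x0)) /\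
   (T0_sp (pi1 X T x0) (wh_open X T x0) <-> T3_sp (pi1 X T x0) (wh_open X T x0)) /\
   (T0_sp (pi1 X T x0) (wh_open X T x0) <-> small_pi1_trivial X T x0) /\
   (T0_sp (pi1 X T x0) (wh_open X T x0) <-> totally_separated_sp (pi1 X T x0) (wh_open X T x0))) /\
  regular_sp (pi1 X T x0) (wh_open X T x0).
Proof.
  intros _ _.
  set (P := pi1 X T x0). set (O := wh_open X T x0).
  assert (Hsmall : T0_sp P O <-> small_pi1_trivial X T x0).
  { split; [apply wh_T0_small_pi1_trivial|].
    intro H. apply T1_sp_T0, T2_sp_T1, totally_separated_T2, wh_totally_separated, H. }
  assert (Hts : T0_sp P O <-> totally_separated_sp P O).
  { split; [intro H; apply wh_totally_separated, Hsmall, H|].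
    intro H. apply T1_sp_T0, T2_sp_T1, totally_separated_T2, H. }
  assert (Ht2 : T0_sp P O <-> T2_sp P O).
  { split; [intro H; apply totally_separated_T2, Hts, H|].
    intro H. apply T1_sp_T0, T2_sp_T1, H. }
  assert (Ht1 : T0_sp P O <-> T1_sp P O).
  { split; [intro H; apply T2_sp_T1, Ht2, H|apply T1_sp_T0]. }
  pose proof (wh_regular X T x0) as Hreg.
  assert (Ht3 : T0_sp P O <-> T3_sp P O).
  { split; [intro H; split; [exact Hreg|apply Ht1, H]|].
    intros [_ H]. apply T1_sp_T0, H. }
  split; [|exact Hreg].
  split; [exact Ht1|]. split; [exact Ht2|]. split; [exact Ht3|].
  split; [exact Hsmall|exact Hts].
Qed.
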